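(* Let $X$ be a locally compact non-compact group. A filter $\xi$ on $X$ is coarse if and only if it is round and invariant.
   Context: A filter on $X$ is a nonempty family of subsets not containing $\emptyset$, stable under finite intersections and supersets. $\xi$ is round if for every $F\in\xi$ there are a neighborhood $V$ of the identity $e$ and $G\in\xi$ with $VG=\{xy:x\in V,y\in G\}\subset F$ (i.e. the sets $VG$ form a basis of $\xi$). $\xi$ is (left) invariant if $xF\in\xi$ for all $x\in X$ and $F\in\xi$. $\xi$ is coarse if for every $F\in\xi$ and every compact $K\subset X$ there is $G\in\xi$ with $KG\subset F$. *)

From mathcomp Require Import all_boot all_order.
From mathcomp Require Import all_classical all_reals all_analysis.
Set Implicit Arguments. Unset Strict Implicit. Unset Printing Implicit Defensive.
Local Open Scope classical_set_scope.

Section Defs.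
Variable X : topologicalType.

Definition is_topological_group (mul : X -> X -> X) (inv : X -> X) (e : X) :=
  [/\ (forall x y z, mul x (mul y z) = mul (mul x y) z),
      (forall x, mul e x = x),
      (forall x, mul (inv x) x = e),
      continuous (fun p : X * X => mul p.1 p.2) &
      continuous inv].


Definition set_mul (mul : X -> X -> X) (A B : set X) : set X :=
  [set z | exists x y, A x /\ B y /\ z = mul x y].

Definition is_filter (xi : set (set X)) :=
  [/\ (exists F, xi F), ~ xi set0,
      (forall F G, xi F -> xi G -> xi (F `&` G)) &
      (forall F G, xi F -> F `<=` G -> xi G)].

Definition round_filter (mul : X -> X -> X) (e : X) (xi : set (set X)) :=
  forall F, xi F -> exists V G, nbhs e V /\ xi G /\ set_mul mul V G `<=` F.

Definition invariant_filter (mul : X -> X -> X) (xi : set (set X)) :=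
  forall x F, xi F -> xi (set_mul mul [set x] F).

Definition coarse_filter (mul : X -> X -> X) (xi : set (set X)) :=
  forall F K, xi F -> compact K -> exists G, xi G /\ set_mul mul K G `<=` F.
End Defs.

(** If ξ is coarse, taking K a compact neighbourhood of e gives roundness and
    K = {x^-1} gives invariance. Conversely, given F, roundness yields V, G
    with VG ⊆ F; a compact K is covered by finitely many right translates Vd,
    d ∈ D, and invariance makes ⋂_{d ∈ D} d^-1 G a member G' of ξ with
    DG' ⊆ G, whence KG' ⊆ VDG' ⊆ VG ⊆ F. *)

From HB Require Import structures.
From mathcomp Require Import all_boot all_order.
From mathcomp Require Import all_classical all_reals all_analysis.
Local Open Scope classical_set_scope.

Section PointedCopy.
Context {X : topologicalType} (x0 : X).

(* [compact_cover] is stated for pointed spaces; any inhabitant serves. *)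
Let pX : Type := X.
HB.instance Definition _ := Topological.on pX.
HB.instance Definition _ := isPointed.Build pX x0.

Lemma compact_cover_compact (K : set X) : compact K -> cover_compact K.
Proof. by move=> cK; have : @compact pX K by []; rewrite compact_cover. Qed.

End PointedCopy.

Lemma locally_compact_nbhs {X : topologicalType} (x : X) :
  locally_compact [set: X] -> exists U, nbhs x U /\ compact U.
Proof.
move=> /(_ x I); rewrite withinET => -[U nU [cU _]].
by exists U.
Qed.

Section TopologicalGroup.
Context {X : topologicalType} {mul : X -> X -> X} {inv : X -> X} {e : X}.
Hypothesis hG : is_topological_group mul inv e.

Local Notation "A * B" := (set_mul mul A B).

Lemma tg_mulgV x : mul x (inv x) = e.
Proof.
have [mulA mul1g mulVg _ _] := hG.
set y := mul x (inv x).
have idem : mul y y = y by rewrite -mulA (mulA (inv x)) mulVg mul1g.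
by rewrite -(mulVg y) -{3}idem mulA mulVg mul1g.
Qed.

Lemma tg_mulKVg x y : mul x (mul (inv x) y) = y.
Proof. by have [mulA mul1g _ _ _] := hG; rewrite mulA tg_mulgV mul1g. Qed.

Lemma tg_mulg1 x : mul x e = x.
Proof.
by have [mulA mul1g mulVg _ _] := hG; rewrite -(mulVg x) mulA tg_mulgV mul1g.
Qed.

Lemma tg_mulgKV x y : mul (mul y (inv x)) x = y.
Proof. by have [mulA _ mulVg _ _] := hG; rewrite -mulA mulVg tg_mulg1. Qed.

Lemma set_mulS {A A' B B' : set X} :
  A `<=` A' -> B `<=` B' -> A * B `<=` A' * B'.
Proof.
move=> AA' BB' _ [a [b [Aa [Bb ->]]]].
by exists a, b; split; [exact: AA'|split; [exact: BB'|]].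
Qed.

Lemma set_mulA (A B C : set X) : (A * B) * C = A * (B * C).
Proof.
have [mulA _ _ _ _] := hG.
apply/seteqP; split=> z.
  move=> [_ [c [[a [b [Aa [Bb ->]]]] [Cc ->]]]].
  by exists a, (mul b c); split=> //; split; [exists b, c|rewrite mulA].
move=> [a [_ [Aa [[b [c [Bb [Cc ->]]]] ->]]]].
by exists (mul a b), c; split; [exists a, b|split; [|rewrite mulA]].
Qed.

Lemma set_mul1K x (A : set X) : [set x] * ([set inv x] * A) = A.
Proof.
apply/seteqP; split=> [_ [_ [_ [-> [[_ [a [-> [Aa ->]]]] ->]]]]|a Aa].
  by rewrite tg_mulKVg.
by exists x, (mul (inv x) a); split=> //; split; [exists (inv x), a|rewrite tg_mulKVg].
Qed.

Lemma nbhs_mul_inv_right (V : set X) x :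
  nbhs e V -> nbhs x [set y | V (mul y (inv x))].
Proof.
have [_ _ _ mul_cont _] := hG.
move=> eV; have xxV : nbhs (mul x (inv x)) V by rewrite tg_mulgV.
have [[P Q] /= [xP invxQ] PQV] := mul_cont (x, inv x) V xxV.
apply: filterS xP => y Py; apply: (PQV (y, inv x)); split=> //.
exact: nbhs_singleton.
Qed.

Lemma compact_cover_translates {K V : set X} : compact K -> nbhs e V ->
  exists s : seq X, K `<=` V * [set` s].
Proof.
move=> /(compact_cover_compact e) cK eV.
pose W x := interior [set y | V (mul y (inv x))].
have [|x Kx|D _ KD] := cK X K W; first by move=> x _; exact: open_interior.
  by exists x => //; exact: nbhs_mul_inv_right.
exists (finmap.enum_fset D) => y /KD [d Dd /interior_subset Vyd].
by exists (mul y (inv d)), d; rewrite tg_mulgKV.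
Qed.

Section InvariantFilter.
Context {xi : set (set X)}.
Hypotheses (hxi : is_filter xi) (xi_inv : invariant_filter mul xi).

Lemma invariant_filter_mul_seq {G : set X} (s : seq X) :
  xi G -> exists G', xi G' /\ [set` s] * G' `<=` G.
Proof.
have [[F0 xiF0] _ xiI _] := hxi.
move=> xiG; elim: s => [|x s [G' [xiG' sG'G]]].
  by exists F0; split=> // z [y [g []]].
exists (G' `&` ([set inv x] * G)); split; first exact/xiI/xi_inv.
move=> _ [y [g [/= sy [[G'g xGg] ->]]]].
move: sy; rewrite in_cons => /orP[/eqP ->|sy]; last by apply: sG'G; exists y, g.
by rewrite -(set_mul1K x G); exists x, g.
Qed.

End InvariantFilter.

Lemma coarse_filter_round {xi : set (set X)} : locally_compact [set: X] ->
  coarse_filter mul xi -> round_filter mul e xi.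
Proof.
move=> /(locally_compact_nbhs e) [U [eU cU]] co F xiF.
have [G [xiG UGF]] := co F U xiF cU.
by exists U, G.
Qed.

Lemma coarse_filter_invariant {xi : set (set X)} (hxi : is_filter xi) :
  coarse_filter mul xi -> invariant_filter mul xi.
Proof.
have [_ _ _ xiS] := hxi.
move=> co x F xiF.
have [G [xiG xGF]] := co F [set inv x] xiF (@compact_set1 X (inv x)).
by apply: xiS xiG _; rewrite -(set_mul1K x G); apply: set_mulS.
Qed.

Lemma round_invariant_filter_coarse {xi : set (set X)} (hxi : is_filter xi) :
  round_filter mul e xi -> invariant_filter mul xi -> coarse_filter mul xi.
Proof.
move=> ro xi_inv F K xiF cK.
have [V [G [eV [xiG VGF]]]] := ro F xiF.
have [s KVs] := compact_cover_translates cK eV.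
have [G' [xiG' sG'G]] := invariant_filter_mul_seq hxi xi_inv s xiG.
exists G'; split=> //.
apply: subset_trans (set_mulS KVs (@subset_refl _ G')) _.
by rewrite set_mulA; apply: subset_trans (set_mulS (@subset_refl _ V) sG'G) VGF.
Qed.

End TopologicalGroup.

Theorem proposition6p6 (X : topologicalType) (mul : X -> X -> X) (inv : X -> X) (e : X)
  (hG : is_topological_group mul inv e) (hH : hausdorff_space X)
  (hlc : locally_compact [set: X]) (hnc : ~ compact [set: X])
  (xi : set (set X)) (hxi : is_filter xi) :
  coarse_filter mul xi <-> (round_filter mul e xi /\ invariant_filter mul xi).
Proof.
split=> [co|[ro xi_inv]].
  exact: (conj (coarse_filter_round hlc co) (coarse_filter_invariant hG hxi co)).
exact: (round_invariant_filter_coarse hG hxi ro xi_inv).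
Qed.
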